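(* Assume Case 2 holds and $d>0$. Then: (1) if $l_1\le1$, then $c(Q^n)=\gamma_n+d^n$ for all $n\ge1$; (2) if $l_1>1$, then $l_1^{-1}\gamma_n+d^n\le c(Q^n)<\gamma_n+d^n$ for all $n\ge1$; (3) if $l_1>1$ and ($n_1>0$ or $s>2$), then $l_1^{-1}\gamma_n+d^n<c(Q^n)$ for all $n\ge1$. Suppose further that $l_1>1$, $n_1=0$ and $s=2$. Then: (4) if $\delta<T_{s-1}$, then $l_1^{-1}\gamma+d=c(q)$ and $l_1^{-1}\gamma_n+d^n<c(Q^n)$ for all $n\ge2$; (5) if $\delta=T_{s-1}$, then $l_1^{-1}\gamma_n+d^n=c(Q^n)$ for all $n\ge1$.
   Context: Let $f(z,w)=(p(z),q(z,w))$ be a holomorphic skew product germ at the origin of $\mathbb{C}^2$ with $f(0,0)=(0,0)$, where $p(z)=a_\delta z^\delta+O(z^{\delta+1})$ with $a_\delta\neq0$ and integer $\delta\ge1$, and $q(z,w)=\sum_{i+j\ge1}b_{ij}z^iw^j$ is not identically zero. For $n\ge1$ write $f^n=(p^n,Q^n)$. For a nonzero germ $g=\sum g_{ij}z^iw^j$ let $c(g)=\min\{i+j:g_{ij}\neq0\}$. The Newton polygon $N(g)$ is the convex hull of $\bigcup_{g_{ij}\neq0}\{(x,y):x\ge i,\ y\ge j\}$. Let $(n_1,m_1),\dots,(n_s,m_s)$ be the vertices of $N(q)$ with $n_1<\cdots<n_s$, $m_1>\cdots>m_s$; for $1\le k\le s-1$ let $T_k$ be the $y$-intercept of the line through $(n_k,m_k)$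 and $(n_{k+1},m_{k+1})$. Case 2 means: $s>1$ and $\delta\le T_{s-1}$; set $(\gamma,d)=(n_s,m_s)$ and $l_1=\frac{n_s-n_{s-1}}{m_{s-1}-m_s}$. Define $\gamma_n=\gamma(\delta^{n-1}+\delta^{n-2}d+\cdots+d^{n-1})$. *)

From mathcomp Require Import all_boot all_order all_algebra.
From mathcomp Require Export reals complex.
Set Implicit Arguments. Unset Strict Implicit. Unset Printing Implicit Defensive.
Import Order.TTheory GRing.Theory Num.Theory.
Local Open Scope ring_scope.

Section Germs.
Variable R : realType.
Local Notation C := (R[i]).

(* A (formal) power series in (z,w): [g i j] is the coefficient of z^i w^j. *)
Definition ser := nat -> nat -> C.

(* Holomorphic germ = convergent power series (coefficients bounded by M r^-(i+j)). *)
Definition convergent2 (g : ser) : Prop :=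
  exists r : R, 0 < r /\ exists M : R,
    forall i j, `|g i j| * ((r ^+ (i + j))%:C)%C <= (M%:C)%C.

Definition convergent1 (p : nat -> C) : Prop :=
  exists r : R, 0 < r /\ exists M : R,
    forall i, `|p i| * ((r ^+ i)%:C)%C <= (M%:C)%C.

Definition ser_one : ser := fun i j => ((i == 0%N) && (j == 0%N))%:R.
Definition ser_z : ser := fun i j => ((i == 1%N) && (j == 0%N))%:R.
Definition ser_w : ser := fun i j => ((i == 0%N) && (j == 1%N))%:R.

Definition ser_mul (A B : ser) : ser := fun i j =>
  \sum_(k < i.+1) \sum_(l < j.+1) A k l * B (i - k)%N (j - l)%N.

Definition ser_pow (A : ser) (n : nat) : ser := iter n (ser_mul A) ser_one.

(* Formal substitution g(A(z,w), B(z,w)), for A, B without constant term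
   (then A^k B^l has order >= k + l, so only k, l <= i + j contribute to
   the coefficient of z^i w^j). *)
Definition ser_comp (g A B : ser) : ser := fun i j =>
  \sum_(k < (i + j).+1) \sum_(l < (i + j).+1)
     g k l * ser_mul (ser_pow A k) (ser_pow B l) i j.

Definition lift_z (p : nat -> C) : ser := fun i j => if j == 0%N then p i else 0.

(* f^n = (p^n, Q^n) for f = (p, q):  f^0 = id, f^(n+1) = f o f^n. *)
Fixpoint skew_iter (p : nat -> C) (q : ser) (n : nat) : ser * ser :=
  match n with
  | 0 => (ser_z, ser_w)
  | n'.+1 => let F := skew_iter p q n' in
             (ser_comp (lift_z p) F.1 F.2, ser_comp q F.1 F.2)
  end.

Definition Qn (p : nat -> C) (q : ser) (n : nat) : ser := (skew_iter p q n).2.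

Definition is_order (g : ser) (c : nat) : Prop :=
  (exists i j, (i + j)%N = c /\ g i j != 0) /\
  (forall i j, g i j != 0 -> (c <= i + j)%N).

(* Newton polygon N(g) ⊂ R^2: convex hull of the union of the quadrants
   {x >= i, y >= j} over the support of g. *)
Definition in_newton (g : ser) (x y : R) : Prop :=
  exists (n : nat) (pt : 'I_n -> nat * nat) (lam : 'I_n -> R),
    [/\ forall k, 0 <= lam k,
        \sum_k lam k = 1,
        forall k, g (pt k).1 (pt k).2 != 0,
        \sum_k lam k * ((pt k).1)%:R <= x &
        \sum_k lam k * ((pt k).2)%:R <= y].

Definition is_vertex (g : ser) (x y : R) : Prop :=
  in_newton g x y /\
  forall (x1 y1 x2 y2 t : R), in_newton g x1 y1 -> in_newton g x2 y2 ->
    0 < t < 1 -> x = t * x1 + (1 - t) * x2 -> y = t * y1 + (1 - t) * y2 ->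
    x1 = x2 /\ y1 = y2.

End Germs.

(* vs = [:: (n_1,m_1); ...; (n_s,m_s)] ; indices are 1-based as in the paper. *)
Definition vn (vs : seq (nat * nat)) (k : nat) : nat := (nth (0, 0)%N vs k.-1).1.
Definition vm (vs : seq (nat * nat)) (k : nat) : nat := (nth (0, 0)%N vs k.-1).2.

(* T_k: y-intercept of the line through (n_k,m_k) and (n_{k+1},m_{k+1}). *)
Definition Tk (vs : seq (nat * nat)) (k : nat) : rat :=
  (vm vs k)%:R + (vn vs k)%:R * ((vm vs k)%:R - (vm vs k.+1)%:R)
                 / ((vn vs k.+1)%:R - (vn vs k)%:R).

Definition l1 (vs : seq (nat * nat)) : rat :=
  let s := size vs in
  ((vn vs s)%:R - (vn vs s.-1)%:R) / ((vm vs s.-1)%:R - (vm vs s)%:R).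

Definition gamma_n (gamma delta d n : nat) : nat :=
  (gamma * \sum_(i < n) delta ^ (n.-1 - i) * d ^ i)%N.

From mathcomp Require Import all_boot all_order all_algebra.
From mathcomp Require Import reals complex boolp.
From mathcomp Require Import zify ring lra.
Import Order.TTheory GRing.Theory Num.Theory.
Local Open Scope ring_scope.
Set Implicit Arguments. Unset Strict Implicit. Unset Printing Implicit Defensive.

(* For positive weights (w1, w2) we order monomials
      z^i w^j by the weighted degree w1 i + w2 j, ties broken by i.  Leading
      monomials add under Cauchy products, and under a substitution g(A, B)
      with lead(A) = z^e and lead(B) = z^x w^y (y > 0) the leading monomial
      is the image of the g-monomial whose image is smallest.  Along the
      iteration lead(p^n) = z^(delta^n); with weights (1, 1) this gives the
      min-plus recurrence  c_0 = 1,  c_(n+1) = min_(b_ij <> 0) i delta^n + j c_n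
      for c_n = c(Q^n).
   2. Newton polygon.  Minimisers of a positive linear form over supp q are
      vertices of N(q).  Reading this on the sorted vertex list yields the
      shape of supp q near the last edge (n_(s-1), m_(s-1)) -- (gamma, d).
   3. Arithmetic.  A purely combinatorial analysis of the min-plus recurrence
      under these shape constraints gives the five statements, first in
      cleared-denominator form over nat, then translated to rationals. *)

Section WeightedOrder.
Variables w1 w2 : nat.

Definition wdeg i j := (w1 * i + w2 * j)%N.

Definition mle i j k l : Prop :=
  (wdeg i j < wdeg k l)%N \/ (wdeg i j = wdeg k l /\ (i <= k)%N).

Lemma mle_refl i j : mle i j i j.
Proof. by right. Qed.

Lemma mle_wdeg i j k l : mle i j k l -> (wdeg i j <= wdeg k l)%N.
Proof. by case=> [/ltnW|[->]]. Qed.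

Lemma mle_of_le i j k : (i <= k)%N -> mle i j k j.
Proof.
move=> ik; have : (w1 * i <= w1 * k)%N by rewrite leq_mul2l ik orbT.
rewrite /mle /wdeg; lia.
Qed.

Lemma mle_trans i j k l m n : mle i j k l -> mle k l m n -> mle i j m n.
Proof. rewrite /mle; lia. Qed.

Lemma mle_add i j k l i' j' k' l' : mle i j k l -> mle i' j' k' l' ->
  mle (i + i') (j + j') (k + k') (l + l').
Proof. rewrite /mle /wdeg !mulnDr; lia. Qed.

(* For w2 > 0 the order is antisymmetric, since the weighted degree and i
   determine j. *)
Lemma wdeg_inj i j l : (0 < w2)%N -> wdeg i j = wdeg i l -> j = l.
Proof. by move=> w2_gt0; rewrite /wdeg => /addnI /eqP; rewrite eqn_pmul2l // => /eqP. Qed.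

Lemma mle_anti i j k l : (0 < w2)%N -> mle i j k l -> mle k l i j -> i = k /\ j = l.
Proof.
rewrite /mle => w2_gt0 le1 le2; have ik : i = k by lia.
by split=> //; subst k; apply: (@wdeg_inj i) => //; lia.
Qed.

Lemma mle_cancel i j k l i' j' k' l' : (0 < w2)%N -> mle i j k l -> mle i' j' k' l' ->
  (k + k' = i + i')%N -> (l + l' = j + j')%N -> k = i /\ l = j.
Proof.
move=> w2_gt0 le1 le2 e1 e2.
have ed : (wdeg k l + wdeg k' l' = wdeg i j + wdeg i' j')%N by rewrite /wdeg; nia.
move: le1 le2; rewrite /mle => le1 le2; have ki : k = i by lia.
by split=> //; subst k; apply: (@wdeg_inj i) => //; lia.
Qed.

End WeightedOrder.

Lemma ex_minn_prop (P : nat -> Prop) :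
  (exists n, P n) -> exists n, P n /\ forall m, P m -> (n <= m)%N.
Proof.
move=> exP; have exP' : exists n, `[< P n >] by case: exP => n /asboolP; exists n.
case: (ex_minnP exP') => n /asboolP Pn nmin; exists n; split => // m /asboolP.
exact: nmin.
Qed.

Lemma ex_lex_min (S : nat -> nat -> Prop) (f1 f2 : nat -> nat -> nat) :
  (exists i j, S i j) -> exists i j, S i j /\ forall k l, S k l ->
    (f1 i j < f1 k l)%N \/ (f1 i j = f1 k l /\ (f2 i j <= f2 k l)%N).
Proof.
move=> [i [j Sij]].
case: (@ex_minn_prop (fun m => exists i j, S i j /\ f1 i j = m))
  => [|m1 [[i1 [j1 [S1 e1]]] min1]]; first by exists (f1 i j), i, j.
case: (@ex_minn_prop (fun m => exists i j, [/\ S i j, f1 i j = m1 & f2 i j = m]))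
  => [|m2 [[i2 [j2 [S2 e2 e2']]] min2]]; first by exists (f2 i1 j1), i1, j1.
exists i2, j2; split => // k l Skl.
have := min1 (f1 k l) (ex_intro _ k (ex_intro _ l (conj Skl erefl))).
rewrite leq_eqVlt e2 => /orP [/eqP e|]; [right | by left].
by split=> //; rewrite e2'; apply: min2; exists k, l.
Qed.

Lemma sum_neq0 (V : nmodType) n (F : nat -> V) :
  \sum_(i < n) F i != 0 -> exists2 i, (i < n)%N & F i != 0.
Proof.
case: (pickP (fun i : 'I_n => F i != 0)) => [i Fi _|F0]; first by exists i.
by rewrite big1 ?eqxx // => i _; apply/eqP; rewrite -[_ == _]negbK F0.
Qed.

Lemma sum_single (V : nmodType) n (F : nat -> V) i0 : (i0 < n)%N ->
  (forall i, (i < n)%N -> i != i0 -> F i = 0) -> \sum_(i < n) F i = F i0.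
Proof.
move=> lt0 F0; rewrite (bigD1 (Ordinal lt0)) //= big1 ?addr0 // => i /= ne.
by apply: F0 => //; apply: contra ne => /eqP e; apply/eqP/val_inj.
Qed.

Section LeadingMonomial.
Variable R : realType.
Variables w1 w2 : nat.
Hypothesis w2_gt0 : (0 < w2)%N.

Definition is_lead (A : ser R) i j :=
  A i j != 0 /\ forall k l, A k l != 0 -> mle w1 w2 i j k l.

Lemma is_lead_uniq (A : ser R) a b a' b' :
  is_lead A a b -> is_lead A a' b' -> a = a' /\ b = b'.
Proof. by move=> [A1 min1] [A2 min2]; apply: mle_anti (min1 _ _ A2) (min2 _ _ A1). Qed.

Lemma ser_mul_supp (A B : ser R) i j : ser_mul A B i j != 0 ->
  exists k l, [/\ (k <= i)%N, (l <= j)%N, A k l != 0 & B (i - k)%N (j - l)%N != 0].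
Proof.
rewrite /ser_mul => /(@sum_neq0 _ _ (fun k => \sum_(l < j.+1) A k l * B (i - k)%N (j - l)%N)).
move=> [k ki /(@sum_neq0 _ _ (fun l => A k l * B (i - k)%N (j - l)%N)) [l lj ABkl]].
exists k, l; split; [exact: ltnSE ki | exact: ltnSE lj | |].
  by apply: contraNneq ABkl => ->; rewrite mul0r.
by apply: contraNneq ABkl => ->; rewrite mulr0.
Qed.

Lemma is_lead_mul (A B : ser R) a b c e : is_lead A a b -> is_lead B c e ->
  is_lead (ser_mul A B) (a + c) (b + e) /\
  ser_mul A B (a + c)%N (b + e)%N = A a b * B c e.
Proof.
move=> [Aab minA] [Bce minB].
have only_lead k l : (k <= a + c)%N -> (l <= b + e)%N ->
    A k l != 0 -> B (a + c - k)%N (b + e - l)%N != 0 -> k = a /\ l = b.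
  move=> kac lbe Akl Bkl.
  by apply: (mle_cancel w2_gt0 (minA _ _ Akl) (minB _ _ Bkl)); lia.
have coef : ser_mul A B (a + c)%N (b + e)%N = A a b * B c e.
  rewrite /ser_mul (@sum_single _ _
      (fun k => \sum_(l < (b + e).+1) A k l * B (a + c - k)%N (b + e - l)%N) a)
    ?ltnS ?leq_addr //; last first.
    move=> k kac ka; apply: big1 => l _.
    have [->|Akl] := eqVneq (A k l) 0; first by rewrite mul0r.
    have [->|Bkl] := eqVneq (B (a + c - k)%N (b + e - l)%N) 0; first by rewrite mulr0.
    have [eka _] := only_lead k l (ltnSE kac) (ltnSE (ltn_ord l)) Akl Bkl.
    by rewrite eka eqxx in ka.
  rewrite (@sum_single _ _ (fun l => A a l * B (a + c - a)%N (b + e - l)%N) b)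
    ?ltnS ?leq_addr ?addKn // => l lbe lb.
  have [->|Aal] := eqVneq (A a l) 0; first by rewrite mul0r.
  have [->|Bal] := eqVneq (B c (b + e - l)%N) 0; first by rewrite mulr0.
  have Bal' : B (a + c - a)%N (b + e - l)%N != 0 by rewrite addKn.
  have [_ elb] := only_lead a l (leq_addr _ _) (ltnSE lbe) Aal Bal'.
  by rewrite elb eqxx in lb.
split=> //; split; first by rewrite coef mulf_neq0.
move=> i j /ser_mul_supp [k [l [ki lj Akl Bkl]]].
by have := mle_add (minA _ _ Akl) (minB _ _ Bkl); rewrite !subnKC.
Qed.

Lemma is_lead_one : is_lead (ser_one R) 0 0.
Proof.
split; first by rewrite /ser_one /= oner_neq0.
move=> k l; rewrite /ser_one.
by case: k => [|k]; case: l => [|l]; rewrite ?eqxx //= => _; apply: mle_refl.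
Qed.

Lemma is_lead_z : is_lead (ser_z R) 1 0.
Proof.
split; first by rewrite /ser_z /= oner_neq0.
move=> k l; rewrite /ser_z.
by case: k => [|[|k]]; case: l => [|l]; rewrite ?eqxx //= => _; apply: mle_refl.
Qed.

Lemma is_lead_w : is_lead (ser_w R) 0 1.
Proof.
split; first by rewrite /ser_w /= oner_neq0.
move=> k l; rewrite /ser_w.
by case: k => [|k]; case: l => [|[|l]]; rewrite ?eqxx //= => _; apply: mle_refl.
Qed.

Lemma is_lead_pow (A : ser R) a b n :
  is_lead A a b -> is_lead (ser_pow A n) (n * a) (n * b).
Proof.
move=> leadA; elim: n => [|n IH]; first by rewrite !mul0n; exact: is_lead_one.
by rewrite /ser_pow iterS -/(ser_pow A n) !mulSn; case: (is_lead_mul leadA IH).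
Qed.

Lemma is_lead_comp (g A B : ser R) e x y i0 j0 :
  (0 < e)%N -> (0 < y)%N -> is_lead A e 0 -> is_lead B x y -> g i0 j0 != 0 ->
  (forall k l, g k l != 0 ->
     mle w1 w2 (i0 * e + j0 * x) (j0 * y) (k * e + l * x) (l * y)) ->
  is_lead (ser_comp g A B) (i0 * e + j0 * x) (j0 * y).
Proof.
move=> e_gt0 y_gt0 leadA leadB gij0 ming.
set term := fun k l => ser_mul (ser_pow A k) (ser_pow B l).
have lead_term k l : is_lead (term k l) (k * e + l * x) (l * y).
  have := (is_lead_mul (is_lead_pow k leadA) (is_lead_pow l leadB)).1.
  by rewrite muln0 add0n.
split; last first.
  move=> i j /(@sum_neq0 _ _ (fun k => \sum_(l < (i + j).+1) g k l * term k l i j)).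
  move=> [k _ /(@sum_neq0 _ _ (fun l => g k l * term k l i j)) [l _ gt]].
  have gkl : g k l != 0 by apply: contraNneq gt => ->; rewrite mul0r.
  have tkl : term k l i j != 0 by apply: contraNneq gt => ->; rewrite mulr0.
  exact: mle_trans (ming _ _ gkl) ((lead_term k l).2 _ _ tkl).
set X := (i0 * e + j0 * x)%N; set Y := (j0 * y)%N.
have only_min k l : g k l != 0 -> term k l X Y != 0 -> k = i0 /\ l = j0.
  move=> gkl tkl.
  have [eX eY] := mle_anti w2_gt0 (ming _ _ gkl) ((lead_term k l).2 _ _ tkl).
  have lj : l = j0 by apply/eqP; rewrite -(eqn_pmul2r y_gt0) eY.
  by subst l; split=> //; apply/eqP; rewrite -(eqn_pmul2r e_gt0); apply/eqP; lia.
rewrite /ser_comp (@sum_single _ _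
    (fun k => \sum_(l < (X + Y).+1) g k l * term k l X Y) i0); last 2 first.
- rewrite /X /Y ltnS; nia.
- move=> k _ ki; apply: big1 => l _.
  have [->|gkl] := eqVneq (g k l) 0; first by rewrite mul0r.
  have [->|tkl] := eqVneq (term k l X Y) 0; first by rewrite mulr0.
  by have [eki _] := only_min k l gkl tkl; rewrite eki eqxx in ki.
rewrite (@sum_single _ _ (fun l => g i0 l * term i0 l X Y) j0); last 2 first.
- rewrite /X /Y ltnS; nia.
- move=> l _ lj.
  have [->|gl] := eqVneq (g i0 l) 0; first by rewrite mul0r.
  have [->|tl] := eqVneq (term i0 l X Y) 0; first by rewrite mulr0.
  by have [_ elj] := only_min i0 l gl tl; rewrite elj eqxx in lj.
by rewrite mulf_neq0 // (lead_term i0 j0).1.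
Qed.

End LeadingMonomial.

Lemma is_lead_order R (A : ser R) x y : is_lead 1 1 A x y -> is_order A (x + y).
Proof.
move=> [Axy minA]; split; first by exists x, y.
by move=> i j /minA /mle_wdeg; rewrite /wdeg !mul1n.
Qed.

Section Iteration.
Variable R : realType.
Variables (p : nat -> R[i]) (q : ser R) (delta : nat).
Hypotheses (delta_gt0 : (0 < delta)%N) (p_low : forall i, (i < delta)%N -> p i = 0)
  (p_delta : p delta != 0) (q_neq0 : exists i j, q i j != 0)
  (q_w : forall i j, q i j != 0 -> (0 < j)%N).
Variables w1 w2 : nat.
Hypothesis w2_gt0 : (0 < w2)%N.

Local Notation P n := (skew_iter p q n).1.
Local Notation Q n := (skew_iter p q n).2.

(* lead(P_(n+1)) = z^(delta^(n+1)), the image of the monomial z^delta of p. *)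
Lemma lead_P_succ n x y : is_lead w1 w2 (P n) (delta ^ n) 0 ->
  is_lead w1 w2 (Q n) x y -> (0 < y)%N -> is_lead w1 w2 (P n.+1) (delta ^ n.+1) 0.
Proof.
move=> leadP leadQ y_gt0.
have e_gt0 : (0 < delta ^ n)%N by rewrite expn_gt0 delta_gt0.
have := is_lead_comp w2_gt0 (g := lift_z p) (i0 := delta) (j0 := 0) e_gt0 y_gt0 leadP leadQ.
rewrite mul0n addn0 -expnS; apply; first by rewrite /lift_z.
move=> k l; rewrite /lift_z; case: (eqVneq l 0%N) => [->|]; last by rewrite eqxx.
move=> pk; rewrite !mul0n !addn0.
apply: mle_of_le; rewrite expnS leq_mul2r; apply/orP; right.
by case: (leqP delta k) => // /p_low pk0; rewrite pk0 eqxx in pk.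
Qed.

Lemma lead_Q_succ n x y : is_lead w1 w2 (P n) (delta ^ n) 0 ->
  is_lead w1 w2 (Q n) x y -> (0 < y)%N ->
  exists i0 j0, [/\ q i0 j0 != 0,
    is_lead w1 w2 (Q n.+1) (i0 * delta ^ n + j0 * x) (j0 * y) &
    forall k l, q k l != 0 -> mle w1 w2 (i0 * delta ^ n + j0 * x) (j0 * y)
                                      (k * delta ^ n + l * x) (l * y)].
Proof.
move=> leadP leadQ y_gt0.
have e_gt0 : (0 < delta ^ n)%N by rewrite expn_gt0 delta_gt0.
have [i0 [j0 [qij0 min0]]] := @ex_lex_min (fun k l => q k l != 0)
   (fun k l => wdeg w1 w2 (k * delta ^ n + l * x) (l * y))
   (fun k l => k * delta ^ n + l * x)%N q_neq0.
have min0' k l : q k l != 0 -> mle w1 w2 (i0 * delta ^ n + j0 * x) (j0 * y)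
                                        (k * delta ^ n + l * x) (l * y).
  by move/min0.
exists i0, j0; split => //.
exact: (is_lead_comp w2_gt0 e_gt0 y_gt0 leadP leadQ qij0 min0').
Qed.

Lemma lead_iter n : is_lead w1 w2 (P n) (delta ^ n) 0 /\
  exists x y, is_lead w1 w2 (Q n) x y /\ (0 < y)%N.
Proof.
elim: n => [|n [leadP [x [y [leadQ y_gt0]]]]].
  by split; [exact: is_lead_z | exists 0%N, 1%N; split => //; exact: is_lead_w].
split; first exact: lead_P_succ leadP leadQ y_gt0.
have [i0 [j0 [qij0 leadQ' _]]] := lead_Q_succ leadP leadQ y_gt0.
exists (i0 * delta ^ n + j0 * x)%N, (j0 * y)%N; split => //.
by rewrite muln_gt0 y_gt0 (q_w qij0).
Qed.

Lemma wdeg_lead_Q_succ n x y x' y' :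
  is_lead w1 w2 (Q n) x y -> is_lead w1 w2 (Q n.+1) x' y' ->
  (exists i j, q i j != 0 /\
     wdeg w1 w2 x' y' = (i * (w1 * delta ^ n) + j * wdeg w1 w2 x y)%N) /\
  (forall i j, q i j != 0 ->
     (wdeg w1 w2 x' y' <= i * (w1 * delta ^ n) + j * wdeg w1 w2 x y)%N).
Proof.
move=> leadQ leadQ'.
have [leadP [x0 [y0 [leadQ0 y0_gt0]]]] := lead_iter n.
have [ex ey] := is_lead_uniq w2_gt0 leadQ0 leadQ; subst x0 y0.
have [i0 [j0 [qij0 leadQ1 min0]]] := lead_Q_succ leadP leadQ y0_gt0.
have [ex ey] := is_lead_uniq w2_gt0 leadQ1 leadQ'; subst x' y'.
have wdeg_img k l : wdeg w1 w2 (k * delta ^ n + l * x) (l * y) =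
    (k * (w1 * delta ^ n) + l * wdeg w1 w2 x y)%N by rewrite /wdeg; ring.
split; first by exists i0, j0; rewrite wdeg_img.
by move=> i j qij; rewrite -wdeg_img; apply/mle_wdeg/min0.
Qed.

End Iteration.

Record min_recurrence (S : nat -> nat -> Prop) (de : nat) (c : nat -> nat) : Prop :=
  MinRecurrence {
    rec_init : c 0%N = 1%N;
    rec_attained : forall n, exists i j, S i j /\ c n.+1 = (i * de ^ n + j * c n)%N;
    rec_min : forall n i j, S i j -> (c n.+1 <= i * de ^ n + j * c n)%N }.

Lemma order_recurrence (R : realType) (p : nat -> R[i]) (q : ser R) (delta : nat) :
  (0 < delta)%N -> (forall i, (i < delta)%N -> p i = 0) -> p delta != 0 ->
  (exists i j, q i j != 0) -> (forall i j, q i j != 0 -> (0 < j)%N) ->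
  exists c, (forall n, is_order (Qn p q n) (c n)) /\
            min_recurrence (fun i j => q i j != 0) delta c.
Proof.
move=> delta_gt0 p_low p_delta q_neq0 q_w.
have lead_Qn n : exists xy : nat * nat, is_lead 1 1 (Qn p q n) xy.1 xy.2.
  have [_ [x [y [leadQ _]]]] := lead_iter delta_gt0 p_low p_delta q_neq0 q_w 1 (ltn0Sn 0) n.
  by exists (x, y).
have [xy leadQ] := choice lead_Qn.
have wdeg11 x y : wdeg 1 1 x y = (x + y)%N by rewrite /wdeg !mul1n.
have step n := wdeg_lead_Q_succ delta_gt0 p_low p_delta q_neq0 q_w (ltn0Sn 0)
  (leadQ n) (leadQ n.+1).
exists (fun n => (xy n).1 + (xy n).2)%N; split => [n|]; first exact: is_lead_order.
split => [|n|n i j qij].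
- by have [-> ->] := is_lead_uniq (ltn0Sn 0) (leadQ 0%N) (is_lead_w R 1 1).
- have [[i [j [qij e]]] _] := step n.
  by exists i, j; move: e; rewrite !wdeg11 mul1n.
- have [_ min] := step n.
  by move: (min i j qij); rewrite !wdeg11 mul1n.
Qed.

Section NewtonPolygon.
Variable R : realType.
Variable q : ser R.
Variables w1 w2 : nat.
Hypotheses (w1_gt0 : (0 < w1)%N) (w2_gt0 : (0 < w2)%N).

Lemma newton_wdeg_bound i j :
  (forall k l, q k l != 0 -> mle w1 w2 i j k l) ->
  forall x y : R, in_newton q x y ->
    ((wdeg w1 w2 i j)%:R <= w1%:R * x + w2%:R * y) /\
    ((wdeg w1 w2 i j)%:R = w1%:R * x + w2%:R * y -> i%:R <= x).
Proof.
move=> minq x y [n [pt [lam [lam_ge0 lam_sum qpt Hx Hy]]]].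
set r : R := (wdeg w1 w2 i j)%:R.
set Sx := \sum_k lam k * ((pt k).1)%:R in Hx *.
set Sy := \sum_k lam k * ((pt k).2)%:R in Hy *.
set Sp := \sum_k lam k * (wdeg w1 w2 (pt k).1 (pt k).2)%:R.
have SpE : w1%:R * Sx + w2%:R * Sy = Sp.
  rewrite /Sx /Sy /Sp !mulr_sumr -big_split; apply: eq_bigr => k _.
  rewrite /wdeg natrD !natrM /=; ring.
have r_le k : r <= (wdeg w1 w2 (pt k).1 (pt k).2)%:R.
  by rewrite ler_nat; apply/mle_wdeg/minq/qpt.
have r_Sp : r <= Sp.
  rewrite -[r]mul1r -lam_sum mulr_suml; apply: ler_sum => k _.
  exact: ler_wpM2l (lam_ge0 k) _ _ (r_le k).
have w1R : (0 : R) < w1%:R by rewrite ltr0n.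
have w2R : (0 : R) < w2%:R by rewrite ltr0n.
have hx : w1%:R * Sx <= w1%:R * x by apply: ler_wpM2l => //; apply: ltW.
have hy : w2%:R * Sy <= w2%:R * y by apply: ler_wpM2l => //; apply: ltW.
split; first lra.
move=> r_eq; have Spr : Sp = r by lra.
have xS : x = Sx.
  have : w1%:R * (x - Sx) = 0 by lra.
  by move/eqP; rewrite mulf_eq0 (gt_eqF w1R) /= subr_eq0 => /eqP.
(* all the mass of lam sits on points of weighted degree r *)
have mass0 : \sum_k lam k * ((wdeg w1 w2 (pt k).1 (pt k).2)%:R - r) = 0.
  under eq_bigr do rewrite mulrBr.
  by rewrite sumrB -/Sp -mulr_suml lam_sum mul1r Spr subrr.
have term_ge0 k : 0 <= lam k * ((wdeg w1 w2 (pt k).1 (pt k).2)%:R - r).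
  by apply: mulr_ge0 => //; rewrite subr_ge0.
have term0 := psumr_eq0P (fun k _ => term_ge0 k) mass0.
have -> : (i%:R : R) = \sum_k lam k * i%:R by rewrite -mulr_suml lam_sum mul1r.
rewrite xS; apply: ler_sum => k _.
have [->|lk] := eqVneq (lam k) 0; first by rewrite !mul0r.
apply: (ler_wpM2l (lam_ge0 k)); rewrite ler_nat.
move/eqP: (term0 k isT); rewrite mulf_eq0 (negbTE lk) /= subr_eq0 eqr_nat => /eqP e.
by case: (minq _ _ (qpt k)) => [|[]//]; rewrite e ltnn.
Qed.

Lemma lex_min_vertex i j : q i j != 0 ->
  (forall k l, q k l != 0 -> mle w1 w2 i j k l) -> is_vertex q i%:R j%:R.
Proof.
move=> qij minq; split.
  exists 1%N, (fun _ => (i, j)), (fun _ => 1); split => //=.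
  - by rewrite big_ord1.
  - by rewrite big_ord1 mul1r.
  - by rewrite big_ord1 mul1r.
move=> x1 y1 x2 y2 t N1 N2 /andP [t0 t1] ex ey.
have [b1 e1] := newton_wdeg_bound minq N1.
have [b2 e2] := newton_wdeg_bound minq N2.
have w1R : (0 : R) < w1%:R by rewrite ltr0n.
have w2R : (0 : R) < w2%:R by rewrite ltr0n.
set r : R := (wdeg w1 w2 i j)%:R in b1 e1 b2 e2.
have rE : r = w1%:R * i%:R + w2%:R * j%:R by rewrite /r /wdeg natrD !natrM.
set v1 := w1%:R * x1 + w2%:R * y1 in b1 e1.
set v2 := w1%:R * x2 + w2%:R * y2 in b2 e2.
have both_eq (u1 u2 m : R) : m <= u1 -> m <= u2 -> t * u1 + (1 - t) * u2 = m ->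
    u1 = m /\ u2 = m.
  move=> le1 le2 e.
  have z1 : t * (u1 - m) = 0 by nra.
  have z2 : (1 - t) * (u2 - m) = 0 by nra.
  move/eqP: z1; move/eqP: z2; rewrite !mulf_eq0 !subr_eq0 (gt_eqF t0) /=.
  by case/orP => [/eqP|/eqP ->] //; lra.
have conv_v : t * v1 + (1 - t) * v2 = r by rewrite rE ex ey /v1 /v2; ring.
have [hv1 hv2] := both_eq v1 v2 r b1 b2 conv_v.
have conv_x : t * x1 + (1 - t) * x2 = i%:R by rewrite ex.
have [x1i x2i] := both_eq x1 x2 i%:R (e1 (esym hv1)) (e2 (esym hv2)) conv_x.
split; first by rewrite x1i x2i.
have : w2%:R * (y1 - y2) = 0.
  by move: hv1 hv2; rewrite /v1 /v2 x1i x2i => hv1 hv2; lra.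
by move/eqP; rewrite mulf_eq0 (gt_eqF w2R) /= subr_eq0 => /eqP.
Qed.

End NewtonPolygon.

Lemma in_newton_up (R : realType) (q : ser R) (x y x' y' : R) :
  in_newton q x y -> x <= x' -> y <= y' -> in_newton q x' y'.
Proof.
move=> [n [pt [lam [lam_ge0 lam_sum qpt Hx Hy]]]] xx yy.
by exists n, pt, lam; split => //; [exact: le_trans Hx xx | exact: le_trans Hy yy].
Qed.

(* Every point (ux, uy) of N(q) with ux < a lies strictly above the
   line through (a, b) and (g, d); otherwise (a, b) would be interior to a
   segment of N(q). *)
Lemma vertex_strict_side (R : realType) (q : ser R) (a b g d ux uy : nat) :
  (ux < a)%N -> (a < g)%N -> (d < b)%N ->
  is_vertex q a%:R b%:R -> in_newton q ux%:R uy%:R -> in_newton q g%:R d%:R ->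
  ((b - d) * g + (g - a) * d < (b - d) * ux + (g - a) * uy)%N.
Proof.
move=> ua ag db [_ vertex_ab] Nu Ng; rewrite ltnNge; apply/negP => below.
have belowR : (b%:R - d%:R) * ux%:R + (g%:R - a%:R) * uy%:R <=
              (b%:R - d%:R) * g%:R + (g%:R - a%:R) * d%:R :> R.
  by rewrite -!natrB ?(ltnW db) ?(ltnW ag) // -!natrM -!natrD ler_nat.
have uaR : (ux%:R < a%:R :> R) by rewrite ltr_nat.
have agR : (a%:R < g%:R :> R) by rewrite ltr_nat.
have gu : g%:R - ux%:R != 0 :> R by apply: lt0r_neq0; lra.
have au : a%:R - ux%:R != 0 :> R by apply: lt0r_neq0; lra.
(* (a, b) = t (ux, uy) + (1 - t) (g, Y) with (g, Y) above (g, d) *)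
set t : R := (g%:R - a%:R) / (g%:R - ux%:R).
set Y : R := (b%:R * (g%:R - ux%:R) - (g%:R - a%:R) * uy%:R) / (a%:R - ux%:R).
have dY : d%:R <= Y by rewrite /Y ler_pdivlMr; [nra | lra].
have t0 : 0 < t by rewrite /t divr_gt0 //; lra.
have t1 : t < 1 by rewrite /t ltr_pdivrMr; lra.
have [] := vertex_ab ux%:R uy%:R g%:R Y t Nu (in_newton_up Ng (lexx _) dY).
- by rewrite t0 t1.
- by rewrite /t; field.
- by rewrite /t /Y; field; rewrite au gu.
by move=> e _; move: uaR agR; rewrite e; lra.
Qed.

Section VertexList.
Variable R : realType.
Variable q : ser R.
Variable vs : seq (nat * nat).
Hypothesis q_neq0 : exists i j, q i j != 0.
Hypothesis vs_sorted :
  sorted (fun a b : nat * nat => (a.1 < b.1)%N && (b.2 < a.2)%N) vs.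
Hypothesis vs_vertices : forall x y : R, is_vertex q x y <->
  exists2 v, v \in vs & x = (v.1)%:R /\ y = (v.2)%:R.

Local Notation V k := (nth (0%N, 0%N) vs k).
Local Notation s := (size vs).

Lemma vs_lt k k' : (k < k')%N -> (k' < s)%N ->
  ((V k).1 < (V k').1)%N /\ ((V k').2 < (V k).2)%N.
Proof.
move=> kk' k's.
have tr : transitive (fun a b : nat * nat => (a.1 < b.1)%N && (b.2 < a.2)%N).
  by move=> y x z /andP [h1 h2] /andP [h3 h4]; apply/andP; split; lia.
have := sorted_ltn_nth tr (0%N, 0%N) vs_sorted k k'.
by rewrite !inE => /(_ (ltn_trans kk' k's) k's kk') /andP.
Qed.

Lemma vs_le k k' : (k <= k')%N -> (k' < s)%N ->
  ((V k).1 <= (V k').1)%N /\ ((V k').2 <= (V k).2)%N.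
Proof.
rewrite leq_eqVlt => /orP [/eqP -> //|kk' k's].
by have [h1 h2] := vs_lt kk' k's; split; apply: ltnW.
Qed.

Lemma vs_newton k : (k < s)%N -> in_newton q (V k).1%:R (V k).2%:R.
Proof.
move=> ks; have [] // : is_vertex q (V k).1%:R (V k).2%:R.
by apply/vs_vertices; exists (V k) => //; apply: mem_nth.
Qed.

Lemma vertex_minimizer w1 w2 : (0 < w1)%N -> (0 < w2)%N ->
  exists k, [/\ (k < s)%N, q (V k).1 (V k).2 != 0,
   (forall i j, q i j != 0 -> (wdeg w1 w2 (V k).1 (V k).2 <= wdeg w1 w2 i j)%N) &
   (forall x y, in_newton q x y ->
      (wdeg w1 w2 (V k).1 (V k).2)%:R <= w1%:R * x + w2%:R * y)].
Proof.
move=> w1_gt0 w2_gt0.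
have [i [j [qij minq]]] :=
  @ex_lex_min (fun i j => q i j != 0) (wdeg w1 w2) (fun i j => i) q_neq0.
have [v vin [ei ej]] := (vs_vertices _ _).1 (lex_min_vertex w1_gt0 w2_gt0 qij minq).
have [k ks ev] : exists2 k, (k < s)%N & v = V k.
  by exists (index v vs); [rewrite index_mem | rewrite nth_index].
subst v.
move/eqP: ei; move/eqP: ej; rewrite !eqr_nat => /eqP ej /eqP ei; subst i j.
exists k; split => // [k' l' /minq /mle_wdeg //|x y].
by move=> /(newton_wdeg_bound w1_gt0 w2_gt0 minq) [].
Qed.

Lemma supp_ge_first_n i j : q i j != 0 -> ((V 0).1 <= i)%N.
Proof.
move=> qij; have [k [ks _ mink _]] := @vertex_minimizer j.+1 1 isT isT.
have := mink _ _ qij; have [k0 _] := vs_le (leq0n k) ks.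
rewrite /wdeg; case: (leqP (V 0).1 i) => // iV lek; exfalso.
have : (j.+1 * i.+1 <= j.+1 * (V k).1)%N by rewrite leq_mul2l; lia.
nia.
Qed.

Lemma supp_axis_ge_first_m j : (V 0).1 = 0%N -> q 0 j != 0 -> ((V 0).2 <= j)%N.
Proof.
move=> v0 q0j; have [k [ks _ mink _]] := @vertex_minimizer j.+1 1 isT isT.
have := mink _ _ q0j; rewrite /wdeg muln0 add0n mul1n => lek.
have vk : (V k).1 = 0%N.
  case: (posnP (V k).1) => // vk_gt0; exfalso.
  have : (j.+1 * 1 <= j.+1 * (V k).1)%N by rewrite leq_mul2l.
  lia.
have k0 : k = 0%N by case: (posnP k) => // kp; have [h _] := vs_lt kp ks; lia.
by subst k; lia.
Qed.

Hypothesis s_gt1 : (1 < s)%N.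
Local Notation G := (V s.-1).1.
Local Notation D := (V s.-1).2.
Local Notation A := (V s.-2).1.
Local Notation B := (V s.-2).2.

Let last_lt : (s.-1 < s)%N. Proof. lia. Qed.
Let prev_lt : (s.-2 < s)%N. Proof. lia. Qed.

Lemma last_edge_lt : (A < G)%N /\ (D < B)%N.
Proof. by apply: vs_lt; lia. Qed.

Lemma supp_ge_last_m i j : q i j != 0 -> (D <= j)%N.
Proof.
move=> qij; have [k [ks _ mink _]] := @vertex_minimizer 1 i.+1 isT isT.
have := mink _ _ qij; have [_ Dk] : ((V k).1 <= G)%N /\ (D <= (V k).2)%N
  by apply: vs_le; lia.
rewrite /wdeg; case: (leqP D j) => // jD lek; exfalso.
have : (i.+1 * j.+1 <= i.+1 * (V k).2)%N by rewrite leq_mul2l; lia.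
nia.
Qed.

Lemma supp_last_vertex : q G D != 0.
Proof.
have [k [ks qk _ lowk]] := @vertex_minimizer 1 G.+1 isT isT.
have := lowk _ _ (vs_newton last_lt); rewrite -!natrM -!natrD ler_nat /wdeg => lek.
suff -> : s.-1 = k by [].
case: (ltngtP k s.-1) => // [kl|]; last by lia.
have [_ h] := vs_lt kl last_lt.
have : (G.+1 * D.+1 <= G.+1 * (V k).2)%N by rewrite leq_mul2l; lia.
nia.
Qed.

Lemma earlier_vertex_above k : (k < s.-2)%N ->
  ((B - D) * G + (G - A) * D < (B - D) * (V k).1 + (G - A) * (V k).2)%N.
Proof.
move=> ks; have [kA _] := vs_lt ks prev_lt.
have [AG DB] := last_edge_lt.
apply: (vertex_strict_side kA AG DB); last 2 first.
- by apply: vs_newton; lia.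
- exact: vs_newton last_lt.
by apply/vs_vertices; exists (V s.-2) => //; apply: mem_nth.
Qed.

Lemma last_edge_line :
  ((B - D) * A + (G - A) * B = (B - D) * G + (G - A) * D)%N.
Proof. have [AG DB] := last_edge_lt; nia. Qed.

Lemma supp_above_last_edge i j : q i j != 0 ->
  ((B - D) * G + (G - A) * D <= (B - D) * i + (G - A) * j)%N.
Proof.
move=> qij; have [AG DB] := last_edge_lt.
have w1_gt0 : (0 < B - D)%N by rewrite subn_gt0.
have w2_gt0 : (0 < G - A)%N by rewrite subn_gt0.
have [k [ks _ mink _]] := vertex_minimizer w1_gt0 w2_gt0.
apply: leq_trans (mink _ _ qij); rewrite /wdeg.
case: (ltngtP k s.-2) => [kl|kg|->].
- exact: ltnW (earlier_vertex_above kl).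
- by have -> : k = s.-1 by lia.
- by rewrite last_edge_line.
Qed.

(* The other endpoint of the last edge is in the support too: it is the
   unique minimiser of a slight perturbation of the edge's linear form. *)
Lemma supp_prev_vertex : q A B != 0.
Proof.
have [AG DB] := last_edge_lt.
set w1 := (B - D)%N; set w2 := (G - A)%N; set K := A.+1.
have w1_gt0 : (0 < w1 * K + 1)%N by lia.
have w2_gt0 : (0 < w2 * K)%N by rewrite muln_gt0 /w2 /K; lia.
have [k [ks qk _ lowk]] := vertex_minimizer w1_gt0 w2_gt0.
have := lowk _ _ (vs_newton prev_lt); rewrite -!natrM -!natrD ler_nat /wdeg => lek.
suff -> : s.-2 = k by [].
have E : (w1 * A + w2 * B = w1 * G + w2 * D)%N by rewrite /w1 /w2 last_edge_line.
case: (ltngtP k s.-2) => [kl|kg|//]; exfalso.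
- have above := earlier_vertex_above kl; rewrite -/w1 -/w2 in above.
  have : ((w1 * G + w2 * D).+1 * K <= (w1 * (V k).1 + w2 * (V k).2) * K)%N.
    by rewrite leq_mul2r above orbT.
  nia.
- have ek : k = s.-1 by lia.
  by subst k; nia.
Qed.

End VertexList.

Lemma gamma_n0 g de d : gamma_n g de d 0 = 0%N.
Proof. by rewrite /gamma_n big_ord0 muln0. Qed.

Lemma gamma_nS g de d n : gamma_n g de d n.+1 = (g * de ^ n + d * gamma_n g de d n)%N.
Proof.
rewrite /gamma_n big_ord_recl /= subn0 expn0 muln1 mulnDr; congr (_ + _)%N.
rewrite mulnCA; congr (_ * _)%N; rewrite big_distrr /=; apply: eq_bigr => i _.
rewrite /bump /= add1n expnS mulnCA; congr (_ * (_ * _))%N.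
by case: n i => [[]//|n] i; rewrite subSS.
Qed.

Lemma gamma_n1 g de d : gamma_n g de d 1 = g.
Proof. by rewrite gamma_nS gamma_n0 expn0 muln1 muln0 addn0. Qed.

(* The constraints that Case 2 puts on the exponent set S = supp q, with
   last edge from (a, b) to (g, d) = (gamma, d): S lies in {j >= d} and on or
   above the line through (a, b) and (g, d), both endpoints are in S, and
   delta <= T_(s-1) (cleared of the denominator g - a). *)
Record case2_shape (S : nat -> nat -> Prop) (de g d a b : nat) : Prop :=
  Case2Shape {
    shape_ag : (a < g)%N;
    shape_db : (d < b)%N;
    shape_d_gt0 : (0 < d)%N;
    shape_de_gt0 : (0 < de)%N;
    shape_delta : ((g - a) * de <= (b - d) * g + (g - a) * d)%N;
    shape_ge_d : forall i j, S i j -> (d <= j)%N;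
    shape_above : forall i j, S i j ->
      ((b - d) * g + (g - a) * d <= (b - d) * i + (g - a) * j)%N;
    shape_gd : S g d;
    shape_ab : S a b }.

(* With
   w1 = b - d and w2 = g - a we have l_1 = w2 / w1, and the quantity
   bound n = w1 gamma_n + w2 d^n is w2 (l_1^-1 gamma_n + d^n). *)
Section MinRecurrence.
Variables (de g d a b : nat) (S : nat -> nat -> Prop) (c : nat -> nat).
Hypotheses (HS : case2_shape S de g d a b) (Hc : min_recurrence S de c).

Local Notation w1 := (b - d)%N.
Local Notation w2 := (g - a)%N.
Local Notation E := (w1 * g + w2 * d)%N.
Local Notation gam n := (gamma_n g de d n).
Local Notation bound n := (w1 * gam n + w2 * d ^ n)%N.

Lemma bound_succ n : bound n.+1 = (w1 * g * de ^ n + d * bound n)%N.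
Proof. rewrite gamma_nS expnS; nia. Qed.

Lemma bound_ge n : (w2 * de ^ n <= bound n)%N.
Proof.
have [_ _ _ _ delta_le _ _ _ _] := HS.
elim: n => [|n IH]; first by rewrite gamma_n0 !expn0 muln0.
rewrite bound_succ expnS.
have h1 : (d * (w2 * de ^ n) <= d * bound n)%N by rewrite leq_mul2l IH orbT.
have h2 : (w2 * de * de ^ n <= E * de ^ n)%N by rewrite leq_mul2r delta_le orbT.
nia.
Qed.

Lemma vertex_minimises n i j : S i j ->
  (w1 * g * de ^ n + d * bound n <= w1 * i * de ^ n + j * bound n)%N.
Proof.
have [_ _ _ _ _ ge_d above _ _] := HS.
move=> Sij; have e := above _ _ Sij.
have [j' ej] : exists j', j = (d + j')%N by exists (j - d)%N; have := ge_d _ _ Sij; lia.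
subst j.
have h1 : (j' * (w2 * de ^ n) <= j' * bound n)%N by rewrite leq_mul2l bound_ge orbT.
have h2 : (E * de ^ n <= (w1 * i + w2 * (d + j')) * de ^ n)%N.
  by rewrite leq_mul2r e orbT.
nia.
Qed.

Lemma rec_closed_form : (w2 <= w1)%N -> forall n, c n = (gam n + d ^ n)%N.
Proof.
have [_ db _ _ _ ge_d _ Sgd _] := HS; have [c0 attained cmin] := Hc.
move=> w21; elim => [|n IH]; first by rewrite c0 gamma_n0.
apply/eqP; rewrite eqn_leq; apply/andP; split.
  by have := cmin n _ _ Sgd; rewrite IH gamma_nS expnS; nia.
have [i [j [Sij ->]]] := attained n.
have key := vertex_minimises n Sij.
have [j' ej] : exists j', j = (d + j')%N by exists (j - d)%N; have := ge_d _ _ Sij; lia.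
subst j; have w1_gt0 : (0 < w1)%N by lia.
rewrite IH gamma_nS expnS -(leq_pmul2l w1_gt0).
have h2 : (bound n <= w1 * (gam n + d ^ n))%N.
  by rewrite mulnDr leq_add2l leq_mul2r w21 orbT.
have h3 : (j' * bound n <= j' * (w1 * (gam n + d ^ n)))%N by rewrite leq_mul2l h2 orbT.
set X := (gam n + d ^ n)%N in h2 h3 *.
nia.
Qed.

Lemma rec_step_lower n i j : (w1 <= w2)%N -> S i j -> (bound n <= w2 * c n)%N ->
  (bound n.+1 + (w2 - w1) * i * de ^ n + j * (w2 * c n - bound n)
     <= w2 * (i * de ^ n + j * c n))%N.
Proof.
move=> w12 Sij IH; have key := vertex_minimises n Sij; rewrite bound_succ.
have h2 : (j * bound n <= j * (w2 * c n))%N by rewrite leq_mul2l IH orbT.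
nia.
Qed.

Lemma rec_lower_bound : (w1 <= w2)%N -> forall n, (bound n <= w2 * c n)%N.
Proof.
have [c0 attained _] := Hc.
move=> w12; elim => [|n IH]; first by rewrite c0 gamma_n0 muln0 add0n expn0.
have [i [j [Sij ->]]] := attained n.
by apply: leq_trans (rec_step_lower w12 Sij IH); rewrite -addnA leq_addr.
Qed.

(* (2), upper half: if l_1 > 1 then c_n < gamma_n + d^n for n >= 1, since
   the vertex (a, b) already beats (g, d) at the first step. *)
Lemma rec_strict_upper : (w1 < w2)%N -> forall n, (0 < n)%N -> (c n < gam n + d ^ n)%N.
Proof.
have [_ _ d_gt0 _ _ _ _ Sgd Sab] := HS; have [c0 _ cmin] := Hc.
move=> w12; elim => [//|[_ _|n IH _]].
  by have := cmin 0%N _ _ Sab; rewrite c0 expn0 gamma_n1 !muln1 expn1; lia.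
have := cmin n.+1 _ _ Sgd; have := IH isT.
rewrite (gamma_nS g de d n.+1) (expnS d n.+1) => h1 h2.
have : (d * c n.+1 < d * (gam n.+1 + d ^ n.+1))%N by rewrite ltn_pmul2l.
set X := gam n.+1 in h1 h2 *; set Y := (d ^ n.+1)%N in h1 h2 *.
set Z := c n.+1 in h1 h2 *.
lia.
Qed.

Lemma rec_strict_lower : (w1 < w2)%N -> (forall j, S 0 j -> (E < w2 * j)%N) ->
  forall n, (0 < n)%N -> (bound n < w2 * c n)%N.
Proof.
have [_ _ d_gt0 _ _ ge_d _ _ _] := HS; have [c0 attained _] := Hc.
move=> w12 axis_above; elim => [//|n IH] _.
have [i [j [Sij ->]]] := attained n.
have j_gt0 : (0 < j)%N by have := ge_d _ _ Sij; lia.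
have lo := rec_lower_bound (ltnW w12) n.
have step := rec_step_lower (ltnW w12) Sij lo.
case: n IH lo step => [_|n IH] lo step.
  case: (posnP i) => [i0|i_gt0].
    by subst i; move: (axis_above _ Sij); rewrite gamma_n1 expn1 c0 !mul0n add0n muln1; lia.
  have slack : (0 < (w2 - w1) * i)%N by rewrite muln_gt0 subn_gt0 w12 i_gt0.
  apply: leq_trans step; rewrite expn0 !muln1 -addnA.
  by rewrite -[X in (X < _)%N]addn0 ltn_add2l addn_gt0 slack.
have slack : (0 < j * (w2 * c n.+1 - bound n.+1))%N.
  by rewrite muln_gt0 j_gt0 subn_gt0 IH.
apply: leq_trans step; rewrite -addnA.
by rewrite -[X in (X < _)%N]addn0 ltn_add2l addn_gt0 slack orbT.
Qed.

(* With a = 0 the edge line meets the w-axis at the vertex (0, b), and then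
   c_1 = b. *)
Lemma rec_first_axis : a = 0%N -> (w1 < w2)%N -> c 1 = b.
Proof.
have [_ db _ _ _ _ _ _ Sab] := HS; have [c0 _ cmin] := Hc.
move=> a0 w12; have ub := cmin 0%N _ _ Sab; rewrite a0 c0 mul0n add0n muln1 in ub.
have lb := rec_lower_bound (ltnW w12) 1; rewrite gamma_n1 expn1 in lb.
subst a; rewrite subn0 in lb *; apply/eqP; rewrite eqn_leq ub /=.
rewrite -(@leq_pmul2l g) //; nia.
Qed.

Lemma rec_strict_lower_from2 : (w1 < w2)%N -> a = 0%N -> (w2 * de < E)%N ->
  forall n, (1 < n)%N -> (bound n < w2 * c n)%N.
Proof.
have [_ db d_gt0 de_gt0 _ ge_d above _ _] := HS; have [_ attained _] := Hc.
move=> w12 a0 delta_lt; have c1 := rec_first_axis a0 w12.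
have EE : E = (w2 * b)%N by subst a; rewrite subn0; nia.
elim => [//|n IH] n1.
have [i [j [Sij ->]]] := attained n.
have j_gt0 : (0 < j)%N by have := ge_d _ _ Sij; lia.
have lo := rec_lower_bound (ltnW w12) n.
have step := rec_step_lower (ltnW w12) Sij lo.
case: n IH n1 lo step => [//|[_ _|n IH _]] lo step; last first.
  have slack : (0 < j * (w2 * c n.+2 - bound n.+2))%N.
    by rewrite muln_gt0 j_gt0 subn_gt0 IH.
  apply: leq_trans step; rewrite -addnA.
  by rewrite -[X in (X < _)%N]addn0 ltn_add2l addn_gt0 slack orbT.
rewrite c1 in lo step *; case: (posnP i) => [i0|i_gt0]; last first.
  have slack : (0 < (w2 - w1) * i * de ^ 1)%N.
    by rewrite !muln_gt0 subn_gt0 w12 i_gt0 expn_gt0 de_gt0.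
  apply: leq_trans step; rewrite -addnA.
  by rewrite -[X in (X < _)%N]addn0 ltn_add2l addn_gt0 slack.
subst i.
have jb : (b <= j)%N by have := above _ _ Sij; rewrite EE muln0 add0n leq_pmul2l //; lia.
rewrite bound_succ gamma_n1 expn1 expn1 EE.
have w1_gt0 : (0 < w1)%N by lia.
have h : (w1 * g * de < w1 * (w2 * b))%N.
  by rewrite -mulnA ltn_pmul2l // -EE; move: delta_lt; rewrite a0 subn0.
have h2 : (b * (w2 * b) <= j * (w2 * b))%N by rewrite leq_mul2r jb orbT.
nia.
Qed.

(* (5): if l_1 > 1, a = 0 and delta = T (so delta = b), the lower bound is an
   equality: c_n = b^n, attained along the monomial (0, b). *)
Lemma rec_lower_bound_eq : a = 0%N -> (w2 * de = E)%N -> (w1 < w2)%N ->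
  forall n, bound n = (w2 * c n)%N.
Proof.
have [_ db _ _ _ _ _ _ Sab] := HS; have [c0 _ cmin] := Hc.
move=> a0 delta_eq w12.
have EE : E = (w2 * b)%N by subst a; rewrite subn0; nia.
have deb : de = b.
  by apply/eqP; rewrite -(@eqn_pmul2l w2); [rewrite delta_eq EE | lia].
have c_le n : (c n <= b ^ n)%N.
  elim: n => [|n IH]; first by rewrite c0.
  have := cmin n _ _ Sab; rewrite a0 mul0n add0n expnS => h.
  by apply: leq_trans h _; rewrite leq_mul2l IH orbT.
have boundE n : bound n = (w2 * b ^ n)%N.
  elim: n => [|n IH]; first by rewrite gamma_n0 muln0 add0n.
  by rewrite bound_succ IH deb expnS; move: EE; nia.
move=> n; apply/eqP; rewrite eqn_leq rec_lower_bound ?(ltnW w12) // boundE.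
by rewrite leq_mul2l c_le orbT.
Qed.

End MinRecurrence.

Section ClearDenominators.
Variable F : numFieldType.
Variables u v x y c : nat.
Hypotheses (u_gt0 : (0 < u)%N) (v_gt0 : (0 < v)%N).

Lemma inv_slope_affineE :
  ((v%:R / u%:R)^-1 * x%:R + y%:R : F) = (u * x + v * y)%:R / v%:R.
Proof.
have u0 : (u%:R : F) != 0 by rewrite pnatr_eq0 -lt0n.
have v0 : (v%:R : F) != 0 by rewrite pnatr_eq0 -lt0n.
by rewrite natrD !natrM; field; rewrite u0 v0.
Qed.

Lemma inv_slope_affine_le :
  ((v%:R / u%:R)^-1 * x%:R + y%:R <= c%:R :> F) = (u * x + v * y <= v * c)%N.
Proof.
by rewrite inv_slope_affineE ler_pdivrMr ?ltr0n // -natrM ler_nat (mulnC c).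
Qed.

Lemma inv_slope_affine_lt :
  ((v%:R / u%:R)^-1 * x%:R + y%:R < c%:R :> F) = (u * x + v * y < v * c)%N.
Proof.
by rewrite inv_slope_affineE ltr_pdivrMr ?ltr0n // -natrM ltr_nat (mulnC c).
Qed.

Lemma inv_slope_affine_eq : (u * x + v * y = v * c)%N ->
  ((v%:R / u%:R)^-1 * x%:R + y%:R = c%:R :> F).
Proof.
move=> e; rewrite inv_slope_affineE e natrM mulrC mulKf //.
by rewrite pnatr_eq0 -lt0n.
Qed.

End ClearDenominators.

Section Case2.
Variable R : realType.
Variables (p : nat -> R[i]) (q : ser R) (delta : nat) (vs : seq (nat * nat)).
Hypotheses (delta_gt0 : (1 <= delta)%N) (p_low : forall i, (i < delta)%N -> p i = 0)
  (p_delta : p delta != 0) (q_neq0 : exists i j, q i j != 0).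
Hypothesis vs_sorted :
  sorted (fun a b : nat * nat => (a.1 < b.1)%N && (b.2 < a.2)%N) vs.
Hypothesis vs_vertices : forall x y : R, is_vertex q x y <->
  exists2 v, v \in vs & x = (v.1)%:R /\ y = (v.2)%:R.
Hypotheses (s_gt1 : (1 < size vs)%N)
  (delta_le_T : (delta%:R <= Tk vs (size vs).-1 :> rat))
  (d_gt0 : (0 < vm vs (size vs))%N).

Local Notation s := (size vs).
Local Notation G := (vn vs s).
Local Notation D := (vm vs s).
Local Notation A := (vn vs s.-1).
Local Notation B := (vm vs s.-1).
Local Notation E := ((B - D) * G + (G - A) * D)%N.
Local Notation supp := (fun i j => q i j != 0).

Lemma last_edge : (A < G)%N /\ (D < B)%N.
Proof. exact: last_edge_lt vs_sorted s_gt1. Qed.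

Lemma Tk_last : Tk vs s.-1 = E%:R / (G - A)%:R.
Proof.
have [AG DB] := last_edge.
have -> : E = ((G - A) * B + A * (B - D))%N by nia.
have GA0 : ((G - A)%:R : rat) != 0 by rewrite pnatr_eq0 subn_eq0 -ltnNge.
rewrite /Tk natrD !natrM !natrB ?(ltnW AG) ?(ltnW DB) //.
by rewrite natrB ?(ltnW AG) // in GA0; field.
Qed.

Lemma l1_last : l1 vs = (G - A)%:R / (B - D)%:R.
Proof.
have [AG DB] := last_edge.
by rewrite /l1 !natrB ?(ltnW AG) ?(ltnW DB).
Qed.

Lemma delta_T_cmp :
  ((delta%:R <= Tk vs s.-1 :> rat) = ((G - A) * delta <= E)%N) /\
  ((delta%:R < Tk vs s.-1 :> rat) = ((G - A) * delta < E)%N).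
Proof.
have [AG _] := last_edge.
have GA_gt0 : (0 : rat) < (G - A)%:R by rewrite ltr0n subn_gt0.
by rewrite Tk_last ler_pdivlMr // ltr_pdivlMr // -natrM ler_nat ltr_nat !(mulnC delta).
Qed.

Lemma case2_supp_shape : case2_shape supp delta G D A B.
Proof.
have [AG DB] := last_edge.
split => //.
- by rewrite -(delta_T_cmp.1).
- exact: supp_ge_last_m.
- exact: supp_above_last_edge.
- exact: supp_last_vertex.
- exact: supp_prev_vertex.
Qed.

(* The orders c(Q^n) are the min-plus orbit of supp q (every monomial of q
   involves w since d > 0). *)
Lemma case2_orders : exists c, (forall n, is_order (Qn p q n) (c n)) /\
  min_recurrence supp delta c.
Proof.
apply: order_recurrence => // i j qij.
have D_le : (D <= j)%N by exact: supp_ge_last_m qij.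
lia.
Qed.

Lemma axis_above_last_edge : (0 < vn vs 1)%N \/ (2 < s)%N ->
  forall j, q 0 j != 0 -> (E < (G - A) * j)%N.
Proof.
move=> H j q0j.
have n1_0 : (nth (0, 0)%N vs 0).1 = 0%N.
  by have := supp_ge_first_n q_neq0 vs_sorted vs_vertices q0j; lia.
case: H => [|s_gt2]; first by rewrite /vn /= n1_0.
have s2_gt0 : (0 < s.-2)%N by lia.
have := earlier_vertex_above vs_sorted vs_vertices s_gt1 s2_gt0.
rewrite n1_0 muln0 add0n => above; apply: leq_trans above _.
by rewrite leq_mul2l (supp_axis_ge_first_m q_neq0 vs_sorted vs_vertices n1_0 q0j) orbT.
Qed.

Lemma slope_gt1 : 1 < l1 vs -> (B - D < G - A)%N.
Proof.
have [_ DB] := last_edge.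
by rewrite l1_last ltr_pdivlMr ?ltr0n ?subn_gt0 // mul1r ltr_nat.
Qed.

Lemma order_q_axis : A = 0%N -> (B - D < G - A)%N -> is_order q B.
Proof.
move=> A0 w12; split.
  by exists 0%N, B; split => //; rewrite -A0; apply: shape_ab case2_supp_shape.
move=> i j qij; have := shape_above case2_supp_shape qij.
by rewrite A0 subn0 in w12 *; nia.
Qed.

Lemma case2_item1 : l1 vs <= 1 -> forall n, (1 <= n)%N ->
  is_order (Qn p q n) (gamma_n G delta D n + D ^ n).
Proof.
move=> l_le1 n _; have [c [ord Hc]] := case2_orders.
have [_ DB] := last_edge.
have w21 : (G - A <= B - D)%N.
  by move: l_le1; rewrite l1_last ler_pdivrMr ?ltr0n ?subn_gt0 // mul1r ler_nat.
by rewrite -(rec_closed_form case2_supp_shape Hc w21).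
Qed.

Lemma case2_item2 : 1 < l1 vs -> forall n, (1 <= n)%N -> exists c,
  is_order (Qn p q n) c /\
  (l1 vs)^-1 * (gamma_n G delta D n)%:R + (D ^ n)%:R <= c%:R /\
  c%:R < ((gamma_n G delta D n)%:R : rat) + (D ^ n)%:R.
Proof.
move=> l_gt1 n n_gt0; have [c [ord Hc]] := case2_orders.
have w12 := slope_gt1 l_gt1; have [AG DB] := last_edge.
exists (c n); split => //; split.
  rewrite l1_last inv_slope_affine_le ?subn_gt0 //.
  exact: rec_lower_bound case2_supp_shape Hc (ltnW w12) n.
by rewrite -natrD ltr_nat (rec_strict_upper case2_supp_shape Hc).
Qed.

Lemma case2_item3 : 1 < l1 vs -> (0 < vn vs 1)%N \/ (2 < s)%N ->
  forall n, (1 <= n)%N -> exists c, is_order (Qn p q n) c /\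
    (l1 vs)^-1 * (gamma_n G delta D n)%:R + (D ^ n)%:R < c%:R.
Proof.
move=> l_gt1 H n n_gt0; have [c [ord Hc]] := case2_orders.
have w12 := slope_gt1 l_gt1; have [AG DB] := last_edge.
exists (c n); split => //; rewrite l1_last inv_slope_affine_lt ?subn_gt0 //.
exact: rec_strict_lower case2_supp_shape Hc w12 (axis_above_last_edge H) n n_gt0.
Qed.

Lemma case2_item4 : 1 < l1 vs -> vn vs 1 = 0%N -> s = 2%N ->
  delta%:R < Tk vs s.-1 ->
  (exists c, is_order q c /\ (l1 vs)^-1 * G%:R + D%:R = c%:R) /\
  (forall n, (2 <= n)%N -> exists c, is_order (Qn p q n) c /\
     (l1 vs)^-1 * (gamma_n G delta D n)%:R + (D ^ n)%:R < c%:R).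
Proof.
move=> l_gt1 n1_0 s2 delta_lt_T; have [c [ord Hc]] := case2_orders.
have w12 := slope_gt1 l_gt1; have [AG DB] := last_edge.
have A0 : A = 0%N by rewrite s2.
split.
  exists B; split; first exact: order_q_axis.
  by rewrite l1_last; apply: inv_slope_affine_eq; rewrite ?subn_gt0 // A0 subn0; nia.
move=> n n_gt1; exists (c n); split => //.
rewrite l1_last inv_slope_affine_lt ?subn_gt0 //.
by apply: (rec_strict_lower_from2 case2_supp_shape Hc) => //; rewrite -delta_T_cmp.2.
Qed.

Lemma case2_item5 : 1 < l1 vs -> vn vs 1 = 0%N -> s = 2%N ->
  delta%:R = Tk vs s.-1 ->
  forall n, (1 <= n)%N -> exists c, is_order (Qn p q n) c /\
    (l1 vs)^-1 * (gamma_n G delta D n)%:R + (D ^ n)%:R = c%:R.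
Proof.
move=> l_gt1 n1_0 s2 delta_eq_T n _; have [c [ord Hc]] := case2_orders.
have w12 := slope_gt1 l_gt1; have [AG DB] := last_edge.
have A0 : A = 0%N by rewrite s2.
have [le lt] := delta_T_cmp; rewrite delta_eq_T lexx ltxx in le lt.
have delta_E : ((G - A) * delta = E)%N.
  by apply/eqP; rewrite eqn_leq -le leqNgt -lt.
exists (c n); split => //; rewrite l1_last; apply: inv_slope_affine_eq; rewrite ?subn_gt0 //.
exact: rec_lower_bound_eq case2_supp_shape Hc A0 delta_E w12 n.
Qed.

End Case2.

Theorem theorem3p3 (R : realType) (p : nat -> R[i]) (q : nat -> nat -> R[i])
    (delta : nat) (vs : seq (nat * nat)) :
  (* p(z) = a_delta z^delta + O(z^(delta+1)), a_delta <> 0, delta >= 1, holomorphic *)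
  (1 <= delta)%N ->
  (forall i, (i < delta)%N -> p i = 0) -> p delta != 0 ->
  convergent1 p ->
  (* q(z,w) = sum_{i+j>=1} b_ij z^i w^j, holomorphic, not identically zero *)
  q 0%N 0%N = 0 -> convergent2 q -> (exists i j, q i j != 0) ->
  (* vs lists the vertices (n_1,m_1),...,(n_s,m_s) of N(q), n increasing, m decreasing *)
  sorted (fun a b : nat * nat => (a.1 < b.1)%N && (b.2 < a.2)%N) vs ->
  (forall x y : R, is_vertex q x y <->
     exists2 v, v \in vs & x = (v.1)%:R /\ y = (v.2)%:R) ->
  let s := size vs in
  let gamma := vn vs s in
  let d := vm vs s in
  let l := l1 vs in
  let gam n := ((gamma_n gamma delta d n)%:R : rat) in
  (* Case 2 and d > 0 *)
  (1 < s)%N -> (delta%:R <= Tk vs s.-1 :> rat) -> (0 < d)%N ->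
  [/\
   (* (1) *)
   (l <= 1 -> forall n, (1 <= n)%N -> is_order (Qn p q n) (gamma_n gamma delta d n + d ^ n)),
   (* (2) *)
   (1 < l -> forall n, (1 <= n)%N -> exists c, is_order (Qn p q n) c /\
       l^-1 * gam n + (d ^ n)%:R <= c%:R /\ c%:R < gam n + (d ^ n)%:R),
   (* (3) *)
   (1 < l -> ((0 < vn vs 1)%N \/ (2 < s)%N) -> forall n, (1 <= n)%N ->
       exists c, is_order (Qn p q n) c /\ l^-1 * gam n + (d ^ n)%:R < c%:R),
   (* (4) *)
   (1 < l -> vn vs 1 = 0%N -> s = 2%N -> delta%:R < Tk vs s.-1 ->
       (exists c, is_order q c /\ l^-1 * gamma%:R + d%:R = c%:R) /\
       (forall n, (2 <= n)%N -> exists c, is_order (Qn p q n) c /\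
            l^-1 * gam n + (d ^ n)%:R < c%:R)) &
   (* (5) *)
   (1 < l -> vn vs 1 = 0%N -> s = 2%N -> delta%:R = Tk vs s.-1 ->
       forall n, (1 <= n)%N -> exists c, is_order (Qn p q n) c /\
            l^-1 * gam n + (d ^ n)%:R = c%:R)].
Proof.
move=> delta_gt0 p_low p_delta _ _ _ q_neq0 vs_sorted vs_vertices s gamma d l gam.
move=> s_gt1 delta_le_T d_gt0.
by split; [apply: case2_item1 | apply: case2_item2 | apply: case2_item3
          | apply: case2_item4 | apply: case2_item5].
Qed.
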